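(* Let $G_M$ be a maximal reducible graph solved by a line-tree $T_M$. Then the line-tree $T_1$ obtained from $T_M$ by inverting the entire tree is a persistent phylogeny solving $G_M$.
   Context: Persistent phylogeny. Let $M$ be a binary matrix with rows indexed by species $S$ and columns by characters $C=\{c_1,\dots,c_m\}$, and $A\subseteq C$ (active characters). A persistent phylogeny for $(M,A)$ is a rooted tree $T$ whose nodes $x$ carry vectors $l_x\in\{0,1\}^m$ (the state of $x$) such that: the root $r$ has $l_r[j]=1$ iff $c_j\in A$; each edge is labelled $c_j^+$ for each character changing from 0 to 1 on it and $c_j^-$ for each changing from 1 to 0; each character changes state on at most two edges, and if on two, they lie on one root-to-leaf path with the gain $c_j^+$ closer to the root than the loss $c_j^-$; each row of $M$ equals $l_x$ for some node $x$ (such a node is a species node of $T$). Red-black graphs. A red-black graph on species $S$ and characters $C$ is a bipartite graph on $S\cup C$ with red or black edges, each character incident only to black edges (inactive) or only to red edges (active). Its associated matrix has $M[s,c]=1$ iff $(s,c)$ is black, or $c$ is active and $(s,c)$ is not an edge; a tree solving the graph is a persistent phylogeny for (associated matrix, set of active characters). $S(c)=\{s:M[s,c]=1\}$. Realizing $c^+$ ($c$ inactive): with $D(c)$ the species of the component of $c$, add red edges from $c$ to $D(c)\setminus N(c)$, delete black edges on $c$ and isolated vertices; realizing $c^-$ ($c$ active, $D(c)\subseteq N(c)$): delete all edges on $c$ and isolated vertices. An active character red-adjacent to all species is free. A c-reduction $\langle c_1^+,\dots,c_k^+\rangle$ is successful if realizing the characters in order is always defined (realizing negatively each character right after it becomes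 free) and yields the empty graph. A red-black graph is reducible if it is connected and admits a successful reduction (i.e. is solved by some persistent phylogeny). Standing assumption: no free, null (isolated) or universal (inactive and black-adjacent to all species) characters, no species with no characters, no two identical character columns. An inactive character $c$ is maximal if no inactive $c'$ has $S(c)\subsetneq S(c')$. A maximal reducible graph is a reducible red-black graph all of whose characters are inactive and maximal. Line-trees and inversion. A line-tree is a tree consisting of a single path from the root (internal nodes have one child). A simple path may be contracted into one edge labelled by the sequence of labels on it. If $T_1$ is a line-tree whose sequence of species in depth-first order is $s_1,\dots,s_k$, the inverted tree $T_2$ is the line-tree with species sequence $s_k,\dots,s_1$, where the edge $(s_{i+1},s_i)$ of $T_2$ carries the same characters as the edge $(s_i,s_{i+1})$ of $T_1$ but with opposite signs (each $c^+$ becomes $c^-$ and vice versa). *)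

From mathcomp Require Import all_boot.
Set Implicit Arguments. Unset Strict Implicit. Unset Printing Implicit Defensive.

(* Nodes are 'I_n.+1, the root is ord0, par gives the parent; lab x is l_x. *)
Record ptree (C : finType) := PTree {
  pt_n : nat;
  pt_par : 'I_pt_n.+1 -> 'I_pt_n.+1;
  pt_lab : 'I_pt_n.+1 -> {ffun C -> bool} }.
Arguments pt_n {C} p.
Arguments pt_par {C} p _.
Arguments pt_lab {C} p _.
Arguments PTree {C} pt_n pt_par pt_lab.

Section Phylo.
Variables (S C : finType).

(* par is a rooted-tree parent function: root is its own "parent" (fixpoint),
   every other node has a parent of smaller index (hence acyclic, connected). *)
Definition is_rooted_tree (T : ptree C) : Prop :=
  pt_par T ord0 = ord0 /\ forall i, i != ord0 -> pt_par T i < i.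

Unset Implicit Arguments.
Definition anc (T : ptree C) (i j : 'I_(pt_n T).+1) : Prop :=
  exists k, iter k (pt_par T) j = i.

(* character c changes state on the edge (par i, i) *)
Definition changes (T : ptree C) (c : C) (i : 'I_(pt_n T).+1) : bool :=
  (i != ord0) && (pt_lab T (pt_par T i) c != pt_lab T i c).

Set Implicit Arguments.
(* the label c^+ (gain) is on edge i iff changes c i and l_i[c] = 1;
   c^- (loss) iff changes c i and l_i[c] = 0. *)
Definition persistent_phylogeny (M : S -> C -> bool) (A : {set C}) (T : ptree C) : Prop :=
  [/\ is_rooted_tree T,
      (forall c, pt_lab T ord0 c = (c \in A)),
      (forall c, #|[set i | changes T c i]| <= 2),
      (forall c i j, changes T c i -> changes T c j -> i != j ->
          (anc T i j /\ pt_lab T i c /\ ~~ pt_lab T j c) \/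
          (anc T j i /\ pt_lab T j c /\ ~~ pt_lab T i c))
    & (forall s, exists x, forall c, pt_lab T x c = M s c)].

(* Vertex set S + C; rb_edge s c says (s,c) is an edge; its colour is red iff
   c is active (c \in rb_active), black otherwise. *)
Record rbgraph := RBGraph { rb_edge : S -> C -> bool; rb_active : {set C} }.

Definition assoc_matrix (G : rbgraph) (s : S) (c : C) : bool :=
  if c \in rb_active G then ~~ rb_edge G s c else rb_edge G s c.

Definition solves (T : ptree C) (G : rbgraph) : Prop :=
  persistent_phylogeny (assoc_matrix G) (rb_active G) T.

Definition rb_adj (G : rbgraph) : rel (S + C) :=
  fun u v => match u, v with
             | inl s, inr c => rb_edge G s c
             | inr c, inl s => rb_edge G s c
             | _, _ => false end.

Definition rb_connected (G : rbgraph) : Prop :=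
  forall u v : S + C, connect (rb_adj G) u v.

Definition Sc (G : rbgraph) (c : C) : {set S} := [set s | assoc_matrix G s c].

Definition standing (G : rbgraph) : Prop :=
  [/\
      (forall c, c \in rb_active G -> ~ (forall s, rb_edge G s c)),
      (forall c, exists s, rb_edge G s c),
      (forall c, c \notin rb_active G -> ~ (forall s, rb_edge G s c)),
      (forall s, exists c, rb_edge G s c)
    &
      (forall c c', (forall s, assoc_matrix G s c = assoc_matrix G s c') -> c = c')].

Definition reducible (G : rbgraph) : Prop :=
  rb_connected G /\ exists T : ptree C, solves T G.

Definition maximal_char (G : rbgraph) (c : C) : Prop :=
  c \notin rb_active G /\
  ~ exists c', c' \notin rb_active G /\ Sc G c \proper Sc G c'.

Definition maximal_reducible (G : rbgraph) : Prop :=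
  [/\ reducible G, (forall c, c \notin rb_active G) & (forall c, maximal_char G c)].

(* A line-tree is given by the sequence of states of its nodes from the root
   down to the leaf; node i has parent i-1. *)
Definition line_tree (ls : seq {ffun C -> bool}) : ptree C :=
  PTree (size ls).-1 (fun i => inord i.-1) (fun i => nth [ffun=> false] ls i).

(* Inversion of the entire line-tree: the node sequence is reversed (so every
   edge keeps its characters with opposite signs), and a new root with the
   all-zero state (no active characters) is put on top. *)
Definition invert_line (ls : seq {ffun C -> bool}) : seq {ffun C -> bool} :=
  [ffun=> false] :: rev ls.

End Phylo.
Arguments anc {C} T i j.
Arguments changes {C} T c i.

From mathcomp Require Import all_boot zify.

Set Implicit Arguments. Unset Strict Implicit. Unset Printing Implicit Defensive.

(* When every character is inactive at the root of a line-tree, persistence says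
   exactly that each column, read from the root down, has the shape 0..01..10..0:
   the nodes carrying the character form an interval, entered by the gain and
   left by the loss.  Reversing the path and adding an all-zero root keeps every
   column of this shape and keeps every old state as a node state, so the
   inverted tree still solves the graph. *)

Section ConvexColumns.
Implicit Types (b : nat -> bool) (i j k m n p q : nat).

Definition convex b := forall i j k, i < j -> j < k -> b i -> b k -> b j.

Definition flip_at b m := (0 < m) && (b m.-1 != b m).

Lemma flip_between b p q : p < q -> b p != b q ->
  exists2 m, p < m <= q & flip_at b m.
Proof.
elim: q => // q IHq; rewrite ltnS leq_eqVlt => /orP[/eqP <- | ltpq] bpq.
  by exists p.+1; rewrite ?ltnSn ?leqnn // /flip_at /= bpq.
have [eq_q | neq_q] := eqVneq (b q) (b q.+1).
  have [|m /andP[ltpm lemq] flip_m] := IHq ltpq; first by rewrite eq_q.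
  by exists m; rewrite ?ltpm ?(leqW lemq).
by exists q.+1; rewrite ?ltnS ?(ltnW ltpq) ?leqnn // /flip_at /= neq_q.
Qed.

Lemma convex_flips b i j : convex b -> i < j -> flip_at b i -> flip_at b j ->
  b i && ~~ b j.
Proof.
move=> cvx ltij /andP[i_gt0 flip_i] /andP[_ flip_j].
have [bi | nbi] := boolP (b i); rewrite /=.
  apply/negP=> bj; have bj1 : b j.-1 = false by move: flip_j; rewrite bj; case: (b j.-1).
  have neq_ij1 : i != j.-1 by apply: contraTneq bi => ->; rewrite bj1.
  suff : b j.-1 by rewrite bj1.
  by apply: (cvx i _ j) => //; lia.
have bi1 : b i.-1 by move: flip_i; rewrite (negbTE nbi); case: (b i.-1).
have [t /andP[le_it le_tj] bt] : exists2 t, i <= t <= j & b t.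
  case/boolP: (b j) => [bj | nbj]; first by exists j; rewrite ?leqnn ?(ltnW ltij).
  by exists j.-1; [lia | move: flip_j; rewrite (negbTE nbj); case: (b j.-1)].
have neq_it : i != t by apply: contraNneq nbi => ->.
suff : b i by rewrite (negbTE nbi).
by apply: (cvx i.-1 _ t) => //; lia.
Qed.

Lemma nonconvex_three_flips b i j k :
  b 0 = false -> i < j -> j < k -> b i -> ~~ b j -> b k ->
  exists m1 m2 m3, [/\ m1 < m2 < m3, m3 <= k &
                       [&& flip_at b m1, flip_at b m2 & flip_at b m3]].
Proof.
move=> b0 ltij ltjk bi nbj bk.
have i_gt0 : 0 < i by case: i bi {ltij} => [|//]; rewrite b0.
have [|m1 /andP[_ le_m1i] flip1] := @flip_between b 0 i i_gt0; first by rewrite b0 bi.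
have [|m2 /andP[lt_im2 le_m2j] flip2] := @flip_between b i j ltij; first by rewrite bi.
have [|m3 /andP[lt_jm3 le_m3k] flip3] := @flip_between b j k ltjk.
  by rewrite bk (negbTE nbj).
exists m1, m2, m3; rewrite flip1 flip2 flip3 le_m3k; split=> //; apply/andP; split; lia.
Qed.

Lemma convex_shift b : convex b -> convex (fun k => (0 < k) && b k.-1).
Proof.
move=> cvx i j k ltij ltjk /andP[i_gt0 bi] /andP[_ bk].
by rewrite (ltn_trans i_gt0 ltij) (cvx i.-1 _ k.-1) //; lia.
Qed.

Lemma convex_rev n b : convex b -> convex (fun k => (k < n) && b (n - k.+1)).
Proof.
move=> cvx i j k ltij ltjk /andP[_ bi] /andP[ltkn bk].
by rewrite (ltn_trans ltjk ltkn) (cvx (n - k.+1) _ (n - i.+1)) //; lia.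
Qed.

End ConvexColumns.

Section LineTree.
Variable C : finType.
Implicit Types (ls : seq {ffun C -> bool}) (c : C).

Definition col ls c k := nth [ffun=> false] ls k c.

Local Notation node ls := 'I_(pt_n (line_tree ls)).+1.

Lemma line_tree_parE ls (i : node ls) : pt_par (line_tree ls) i = i.-1 :> nat.
Proof. by rewrite /= inordK // (leq_ltn_trans (leq_pred i)). Qed.

Lemma line_tree_iter_parE ls k (j : node ls) :
  iter k (pt_par (line_tree ls)) j = j - k :> nat.
Proof. by elim: k => [|k IHk]; rewrite ?subn0 // iterS line_tree_parE IHk subnS. Qed.

Lemma line_tree_rooted ls : is_rooted_tree (line_tree ls).
Proof.
split; first exact/val_inj/line_tree_parE.
by move=> i; rewrite -val_eqE -lt0n => i_gt0; rewrite line_tree_parE ltn_predL.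
Qed.

Lemma line_tree_anc ls (i j : node ls) : i <= j -> anc (line_tree ls) i j.
Proof.
by move=> le_ij; exists (j - i); apply: val_inj; rewrite /= line_tree_iter_parE subKn.
Qed.

Lemma line_tree_changesE ls c (i : node ls) :
  changes (line_tree ls) c i = flip_at (col ls c) i.
Proof. by rewrite /changes /flip_at /col -line_tree_parE -val_eqE lt0n. Qed.

Lemma line_tree_changes_ordered ls c (i j : node ls) :
  convex (col ls c) -> changes (line_tree ls) c i -> changes (line_tree ls) c j -> i < j ->
  anc (line_tree ls) i j /\ pt_lab (line_tree ls) i c /\ ~~ pt_lab (line_tree ls) j c.
Proof.
rewrite !line_tree_changesE => cvx flip_i flip_j lt_ij.
have /andP[bi nbj] := convex_flips cvx lt_ij flip_i flip_j.
by split; first exact/line_tree_anc/ltnW.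
Qed.

Lemma card_line_tree_changes ls c :
  convex (col ls c) -> #|[set i | changes (line_tree ls) c i]| <= 2.
Proof.
move=> cvx; rewrite leqNgt; apply/card_gt2P => -[x [y [z []]]].
rewrite !inE => -[chx chy chz] [neq_xy neq_yz neq_zx].
have lab_neq (u v : node ls) : changes (line_tree ls) c u -> changes (line_tree ls) c v ->
    u != v -> pt_lab (line_tree ls) u c != pt_lab (line_tree ls) v c.
  move=> chu chv; rewrite neq_ltn => /orP[lt_uv | lt_vu].
    by have [_ [-> /negbTE ->]] := line_tree_changes_ordered cvx chu chv lt_uv.
  by have [_ [-> /negbTE ->]] := line_tree_changes_ordered cvx chv chu lt_vu.
move: (lab_neq x y chx chy neq_xy) (lab_neq y z chy chz neq_yz) (lab_neq z x chz chx neq_zx).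
by case: (pt_lab _ x c); case: (pt_lab _ y c); case: (pt_lab _ z c).
Qed.

Lemma line_tree_persistent (S : finType) (M : S -> C -> bool) (A : {set C}) ls :
    (forall c, col ls c 0 = (c \in A)) -> (forall c, convex (col ls c)) ->
    (forall s, exists x : node ls, forall c, col ls c x = M s c) ->
  persistent_phylogeny M A (line_tree ls).
Proof.
move=> root cvx species; split=> //; first exact: line_tree_rooted.
  by move=> c; apply: card_line_tree_changes.
move=> c i j chi chj; rewrite neq_ltn => /orP[lt_ij | lt_ji].
  by left; apply: line_tree_changes_ordered.
by right; apply: line_tree_changes_ordered.
Qed.

Lemma line_tree_convex (S : finType) (M : S -> C -> bool) (A : {set C}) ls :
  persistent_phylogeny M A (line_tree ls) -> (forall c, c \notin A) ->
  forall c, convex (col ls c).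
Proof.
case=> _ root card _ _ inactive c i j k lt_ij lt_jk bi bk; apply/negPn/negP => nbj.
have b0 : col ls c 0 = false by rewrite [LHS]root (negbTE (inactive c)).
have [m1 [m2 [m3 [/andP[lt12 lt23] le3k /and3P[flip1 flip2 flip3]]]]] :=
  nonconvex_three_flips b0 lt_ij lt_jk bi nbj bk.
have lt_k_size : k < size ls.
  by apply: contraTT bk; rewrite -leqNgt => ?; rewrite /col nth_default ?ffunE.
have lt_k : k < (pt_n (line_tree ls)).+1 by rewrite /=; lia.
have flip_node m : m <= k -> flip_at (col ls c) m ->
    (inord m : node ls) \in [set i | changes (line_tree ls) c i].
  by move=> le_mk flip_m; rewrite inE line_tree_changesE inordK // (leq_ltn_trans le_mk).
have inord_neq m m' : m < m' <= k -> (inord m : node ls) != inord m'.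
  move=> /andP[lt_mm' le_m'k]; rewrite -val_eqE /= !inordK ?(ltn_eqF lt_mm') //; lia.
move: (card c); rewrite leqNgt => /negP; apply; apply/card_gt2P.
exists (inord m1), (inord m2), (inord m3); split; split.
- by apply: flip_node => //; lia.
- by apply: flip_node => //; lia.
- exact: flip_node.
- by apply: inord_neq; rewrite lt12 /=; lia.
- by apply: inord_neq; rewrite lt23.
- by rewrite eq_sym; apply: inord_neq; rewrite le3k; lia.
Qed.

Lemma col_rev ls c k : col (rev ls) c k = (k < size ls) && col ls c (size ls - k.+1).
Proof.
rewrite /col; case: ltnP => [lt_k | le_k]; first by rewrite nth_rev.
by rewrite nth_default ?size_rev // ffunE.
Qed.

Lemma col_invert_line ls c k : col (invert_line ls) c k = (0 < k) && col (rev ls) c k.-1.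
Proof. by case: k => [|k]; rewrite /col /= ?ffunE. Qed.

Lemma convex_invert_line ls c : convex (col ls c) -> convex (col (invert_line ls) c).
Proof.
move=> cvx i j k; rewrite !col_invert_line !col_rev.
exact: convex_shift (convex_rev (n := size ls) cvx) i j k.
Qed.

Lemma invert_line_node ls (x : node ls) :
  exists y : node (invert_line ls), forall c, col (invert_line ls) c y = col ls c x.
Proof.
case: ls x => [|f ls] x; first by exists ord0 => c; rewrite /col /= nth_nil !ffunE.
have lt_x : x < (size ls).+1 := ltn_ord x.
have lt_y : (size ls).+1 - x < (pt_n (line_tree (invert_line (f :: ls)))).+1.
  by rewrite /= size_rev /=; lia.
exists (Ordinal lt_y) => c; rewrite col_invert_line col_rev /=.
have -> : 0 < (size ls).+1 - x by lia.
have -> : ((size ls).+1 - x).-1 < (size ls).+1 by lia.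
by have -> : (size ls).+1 - ((size ls).+1 - x).-1.+1 = x by lia.
Qed.

End LineTree.

Theorem lemma3 (S C : finType) (G : rbgraph S C) (TM : seq {ffun C -> bool}) :
  standing G ->
  maximal_reducible G ->
  solves (line_tree TM) G ->
  solves (line_tree (invert_line TM)) G.
Proof.
move=> _ [_ inactive _] solTM.
have cvx := line_tree_convex solTM inactive.
have [_ _ _ _ species] := solTM.
apply: line_tree_persistent.
- by move=> c; rewrite /col /= ffunE (negbTE (inactive c)).
- by move=> c; apply: convex_invert_line.
- move=> s; have [x lab_x] := species s; have [y col_y] := invert_line_node x.
  by exists y => c; rewrite col_y; apply: lab_x.
Qed.
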